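(* Let $p\geq3$ be prime, $n\geq 2$, and $\Phi_{p^n}(T)=\sum_{k=0}^{p-1}T^{p^{n-1}k}$. In the transfinite Newton algorithm applied to $\Phi_{p^n}$: (1) the maximal slope at step $0$ is $s_0=0$ and $1\in\bar{\mathbb{F}}_p$ is a root of the residue polynomial of $\Phi^{(0,n)}=\Phi_{p^n}$; (2) choosing $z_0=1$, the maximal slope of $\mathrm{NP}(\Phi^{(1,n)})$ is $s_1=\frac{1}{p^{n-1}(p-1)}$, and $(-1)^n\zeta_{2(p-1)}$ is a root of the residue polynomial of $\Phi^{(1,n)}$ of multiplicity $p^{n-1}$. Consequently, choosing $z_1=(-1)^n\zeta_{2(p-1)}$, one has $\zeta_{p^n}^{(1)}=1+(-1)^n\zeta_{2(p-1)}\,p^{\frac{1}{p^{n-1}(p-1)}}$.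
   Context: $\mathbb{L}_p$ is the $p$-adic Mal'cev–Neumann field of formal sums $\sum_{x\in\mathbb{Q}}[\alpha_x]p^x$ ($\alpha_x\in\bar{\mathbb{F}}_p$, $[\cdot]$ Teichmüller lift, well-ordered support), valuation $v_p$ = minimum of support, $C_x(\alpha)=\alpha_x$. $\zeta_{2(p-1)}$ is a fixed primitive $2(p-1)$-th root of unity in $\bar{\mathbb{F}}_p$, identified with its Teichmüller lift. For $P(T)=\sum_{k=0}^Na_kT^{N-k}$ ($a_0,a_N\ne0$): $\mathrm{NP}(P)$ is the lower convex hull of $(k,v_p(a_k))$; $m_{\max}$ is the largest breakpoint $<N$; maximal slope $s_{\max}=\frac{v_p(a_N)-v_p(a_{m_{\max}})}{N-m_{\max}}$; residue polynomial $\mathrm{Res}_P(T)=\sum_{k=0}^{N-m_{\max}}C_{v_p(a_{m_{\max}})+s_{\max}(N-m_{\max}-k)}(a_{N-k})T^k$. Algorithm: $\zeta_{p^n}^{(-1)}=0$; for $i\ge0$, $\Phi^{(i,n)}(T)=\Phi_{p^n}(T+\zeta_{p^n}^{(i-1)})$, $s_i$ its maximal slope, $z_i$ a chosen root of $\mathrm{Res}_{\Phi^{(i,n)}}$, and $\zeta_{p^n}^{(i)}=\zeta_{p^n}^{(i-1)}+[z_i]p^{s_i}$. *)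

From HB Require Import structures.
From mathcomp Require Import all_boot all_order all_algebra.
From mathcomp Require Import boolp.
Set Implicit Arguments. Unset Strict Implicit. Unset Printing Implicit Defensive.
Import Order.TTheory GRing.Theory Num.Theory.
Local Open Scope ring_scope.

(* Teichmueller digits of an integer a, viewed in Z_p (a subring of L_p):  *)
(*   a = sum_{i>=0} [alpha_i] p^i,  alpha_i in F_p.                        *)
(* Digit i is computed modulo p^(i+1): the Teichmueller lift of the class  *)
(* of r mod p is congruent to r^(p^i) modulo p^(i+1); one peels off digits *)
(* r_{j+1} = (r_j - [r_j mod p]) / p (exact division in Z).               *)
(* The result is the representative in {0,..,p-1} of alpha_i.             *)
Fixpoint tdig_aux (p K j : nat) (r : int) : int :=
  match j with
  | 0 => (r %% p%:Z)%Z
  | j'.+1 => tdig_aux p K j' ((r - ((r %% p%:Z)%Z) ^+ (p ^ K)) %/ p%:Z)%Z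
  end.

Definition teich_digit (p : nat) (a : int) (i : nat) : nat :=
  `|tdig_aux p i i a|%N.

(* C_x(a) for a in Z (subset of L_p), x in Q, with value in a field F of
   characteristic p (containing F_p-bar):  the digit at exponent x,
   which is 0 unless x is a nonnegative integer. *)
Definition coefC (F : nzRingType) (p : nat) (x : rat) (a : int) : F :=
  if (denq x == 1) && (0 <= numq x) then (teich_digit p a `|numq x|%N)%:R
  else 0.

Definition vp (p : nat) (a : int) : rat := (logn p `|a|%N)%:R.

(* Newton polygon data for P(T) = sum_{k=0}^N a_k T^(N-k), P in Z[T].     *)
Section NewtonPolygon.
Variables (p : nat) (P : {poly int}).

Definition npN : nat := (size P).-1.
Definition npa (k : nat) : int := P`_(npN - k).
Definition npv (k : nat) : rat := vp p (npa k).

(* (m, v(a_m)) is a vertex (breakpoint) of the lower convex hull of the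
   points (k, v(a_k)), 0 <= k <= N, a_k <> 0: some line through it lies
   strictly below all the other points. *)
Definition np_vertex (m : nat) : Prop :=
  (m <= npN)%N /\ npa m != 0 /\
  exists sigma : rat, forall k : nat, (k <= npN)%N -> npa k != 0 -> k <> m ->
     npv m + sigma * (k%:R - m%:R) < npv k.

Definition m_max : nat := (\max_(m < npN | `[< np_vertex m >]) m)%N.

Definition s_max : rat :=
  (npv npN - npv m_max) / (npN - m_max)%:R.

Definition res_poly (F : nzRingType) : {poly F} :=
  \poly_(k < (npN - m_max).+1)
     coefC F p (npv m_max + s_max * (npN - m_max - k)%:R) (npa (npN - k)).

End NewtonPolygon.

Definition cyclo_pn (p n : nat) : {poly int} :=
  \sum_(k < p) 'X^(p ^ n.-1 * k).

(** At step 0 the Newton polygon of Phi_{p^n} is flat, so its residue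
    polynomial is the reduction of Phi_{p^n} mod p, which vanishes at 1
    because Phi_{p^n}(1) = p.  Modulo p,
      Phi_{p^n}(T + 1) = ((T + 1)^{p^n} - 1) / ((T + 1)^{p^{n-1}} - 1) = T^N,
    N = p^{n-1}(p - 1), so every interior coefficient of Phi_{p^n}(T + 1) has
    valuation at least 1, while the constant term is p and the leading one
    is 1: the polygon is the single segment from (0, 0) to (N, 1).  Its
    residue polynomial is T^N + 1 = (T^{p-1} + 1)^{p^{n-1}} by Frobenius, and
    (-1)^n zeta is a simple root of T^{p-1} + 1, since zeta^{p-1} = -1 and
    the derivative -T^{p-2} does not vanish there. *)
From Pilot Require Import Defs.
From HB Require Import structures.
From mathcomp Require Import all_boot all_order all_algebra.
From mathcomp Require Import boolp.
From mathcomp Require Import lra zify.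
Set Implicit Arguments. Unset Strict Implicit. Unset Printing Implicit Defensive.
Import Order.TTheory GRing.Theory Num.Theory.
Local Open Scope ring_scope.

Section Valuation.
Variable p : nat.

Lemma vp1 : vp p 1 = 0.
Proof. by rewrite /vp logn1. Qed.

Lemma vp_prime : prime p -> vp p p%:Z = 1.
Proof. by move=> p_pr; rewrite /vp logn_prime // eqxx. Qed.

Lemma vp_ge1 (a : int) : prime p -> a != 0 -> (p %| `|a|)%N -> 1 <= vp p a.
Proof.
move=> p_pr a_neq0 p_dvd; rewrite /vp ler1n logn_gt0 mem_primes p_pr.
by rewrite absz_gt0 a_neq0.
Qed.

End Valuation.

Section TeichmuellerDigits.
Variables (F : nzRingType) (p : nat).

Lemma coefC0 (a : int) : prime p -> p \in [pchar F] ->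
  Defs.coefC F p 0 a = a%:~R.
Proof.
move=> p_pr pF; rewrite /Defs.coefC /teich_digit /=.
have p_neq0 : p%:Z != 0 by rewrite eqz_nat -lt0n prime_gt0.
have a_mod : (a %% p)%Z = `|(a %% p)%Z|%:Z by rewrite gez0_abs // modz_ge0.
rewrite [in RHS](divz_eq a p) rmorphD rmorphM /=.
have -> : (p%:Z)%:~R = 0 :> F by rewrite -pmulrn pcharf0.
by rewrite mulr0 add0r [in RHS]a_mod.
Qed.

Lemma coefC_frac (x : rat) (a : int) : 0 < x < 1 -> Defs.coefC F p x a = 0.
Proof.
move=> /andP[x_gt0 x_lt1]; rewrite /Defs.coefC.
case: ifP => // /andP[/eqP den1 _].
have x_int := numqE x; rewrite den1 mulr1 in x_int.
rewrite -x_int ltr0z in x_gt0; rewrite -x_int ltrz1 in x_lt1.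
lia.
Qed.

Lemma coefC1_p : (1 < p)%N -> Defs.coefC F p 1 p%:Z = 1.
Proof.
move=> p_gt1; rewrite /Defs.coefC /= /teich_digit /= modzz expn1 expr0n /=.
have p_neq0 : p != 0%N by rewrite -lt0n ltnW.
by rewrite (negPf p_neq0) subr0 divzz eqz_nat p_neq0 modz_small.
Qed.

End TeichmuellerDigits.

Section NewtonPolygon.
Variables (p : nat) (P : {poly int}).
Local Notation N := (npN P).
Local Notation a := (npa P).
Local Notation v := (npv p P).

(* The supporting line at a vertex lies strictly below both endpoints;
   weighting the two inequalities by N - m and m eliminates its slope. *)
Lemma np_vertex_below_chord m : (0 < m < N)%N -> a 0 != 0 -> a N != 0 ->
  np_vertex p P m -> N%:R * v m < (N - m)%:R * v 0 + m%:R * v N.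
Proof.
move=> /andP[m_gt0 m_ltN] a0 aN [_ [_ [s below]]].
have at0 := below 0%N (leq0n _) a0 (elimF eqP (ltn_eqF m_gt0)).
have atN : v m + s * (N%:R - m%:R) < v N.
  by apply: below => //; apply/eqP; rewrite gtn_eqF.
rewrite sub0r in at0; rewrite natrB ?(ltnW m_ltN) //.
have m_pos : (0 : rat) < m%:R by rewrite ltr0n.
have Nm_pos : (0 : rat) < N%:R - m%:R by rewrite subr_gt0 ltr_nat.
nra.
Qed.

Lemma m_max_eq0 : a 0 != 0 -> a N != 0 ->
  (forall m, (0 < m < N)%N -> a m != 0 ->
     (N - m)%:R * v 0 + m%:R * v N <= N%:R * v m) ->
  m_max p P = 0%N.
Proof.
move=> a0 aN above; apply: big1 => m /asboolP vertex_m.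
apply/eqP; rewrite -leqn0 leqNgt; apply/negP => m_gt0.
have m_int : (0 < m < N)%N by rewrite m_gt0 ltn_ord.
have := np_vertex_below_chord m_int a0 aN vertex_m.
by case: vertex_m => _ [am _]; rewrite ltNge above.
Qed.

Hypothesis m_max0 : m_max p P = 0%N.

Lemma s_max_m_max0 : s_max p P = (v N - v 0) / N%:R.
Proof. by rewrite /s_max m_max0 subn0. Qed.

Lemma res_poly_m_max0 (F : nzRingType) : res_poly p P F =
  \poly_(k < N.+1) Defs.coefC F p (v 0 + s_max p P * (N - k)%:R) P`_k.
Proof.
rewrite /res_poly m_max0 subn0; apply/polyP => i; rewrite !coef_poly.
by case: ifP => // i_le; rewrite /npa subKn.
Qed.

Lemma res_poly_flat (F : nzRingType) : prime p -> p \in [pchar F] ->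
  v 0 = 0 -> s_max p P = 0 -> res_poly p P F = map_poly intr P.
Proof.
move=> p_pr pF v0 s0; rewrite res_poly_m_max0 v0 s0; apply/polyP => k.
rewrite coef_poly coef_map /= mul0r addr0 coefC0 //.
case: ltnP => // k_big; rewrite nth_default ?mulr0z //.
by apply: leq_trans k_big; rewrite /npN leqSpred.
Qed.

End NewtonPolygon.

Lemma exprD_pchar_expn (R : comNzRingType) p k (x y : R) :
  prime p -> p \in [pchar R] ->
  (x + y) ^+ (p ^ k) = x ^+ (p ^ k) + y ^+ (p ^ k).
Proof.
by move=> p_pr pR; apply: exprDn_pchar; rewrite pnatX (pnatE _ p_pr) pR.
Qed.

Lemma intr_eq0_pchar (R : nzRingType) p (a : int) : p \in [pchar R] ->
  (a%:~R == 0 :> R) = (p %| `|a|)%N.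
Proof.
move=> pR; rewrite (dvdn_pcharf pR).
by case: a => m //=; rewrite NegzE mulrNz oppr_eq0.
Qed.

Lemma expr_sign_mul_even (R : comNzRingType) n m (z : R) : ~~ odd m ->
  ((-1) ^+ n * z) ^+ m = z ^+ m.
Proof.
by move=> m_even; rewrite exprMn exprAC -signr_odd (negPf m_even) expr1n mul1r.
Qed.

Section FieldFacts.
Variable F : fieldType.

Lemma Xn_add1_neq0 m : (0 < m)%N -> ('X^m + 1 : {poly F}) != 0.
Proof. by move=> m_gt0; rewrite -polyC1 monic_neq0 ?monicXnaddC. Qed.

(* A double root of 'X^m + 1 would also be a root of its derivative. *)
Lemma mup_Xn_add1 m (y : F) : m%:R != 0 :> F -> y ^+ m = -1 ->
  mup y ('X^m + 1) = 1%N.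
Proof.
move=> m_neq0 y_root.
have m_gt0 : (0 < m)%N by rewrite lt0n; apply: contraNneq m_neq0 => ->.
have y_neq0 : y != 0.
  apply/eqP => y0; move: y_root; rewrite y0 expr0n gtn_eqF // => /eqP.
  by rewrite eq_sym oppr_eq0 oner_eq0.
have g_neq0 := Xn_add1_neq0 m_gt0.
apply/eqP; rewrite eqn_leq -XsubC_dvd // dvdp_XsubCl rootE !hornerE y_root.
rewrite addNr eqxx andbT mup_leq //; apply/negP => /dvdpP[h g_eq].
have := congr1 (fun r => (deriv r).[y]) g_eq.
rewrite derivD derivXn -polyC1 derivC addr0 derivM deriv_exp !hornerE /= subrr.
rewrite expr1 !mulr0 addr0 hornerMn hornerXn => /eqP.
rewrite mulr0 addr0 -mulr_natr mulf_eq0 (negPf m_neq0) expf_eq0.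
by rewrite (negPf y_neq0) andbF.
Qed.

Lemma mupX (y : F) (g : {poly F}) k : g != 0 ->
  mup y (g ^+ k) = (k * mup y g)%N.
Proof.
move=> g_neq0; elim: k => [|k IHk].
  by rewrite expr0 mupNroot // rootC oner_eq0.
by rewrite exprS mupM ?expf_neq0 // IHk mulSn.
Qed.

Lemma prim_expr_half m (z : F) : (0 < m)%N -> (2 * m).-primitive_root z ->
  z ^+ m = -1.
Proof.
move=> m_gt0 z_prim.
have : (z ^+ m) ^+ 2 == 1 by rewrite -exprM mulnC prim_expr_order.
rewrite sqrf_eq1 => /orP[/eqP zm1 | /eqP //].
have := prim_order_dvd z_prim m; rewrite zm1 eqxx => /(dvdn_leq m_gt0).
lia.
Qed.

End FieldFacts.

Section CyclotomicPrimePower.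
Variables (p n : nat).
Hypothesis p_pr : prime p.
Local Notation q := (p ^ n.-1)%N.
Local Notation N := (p ^ n.-1 * (p - 1))%N.
Local Notation Phi := (cyclo_pn p n).
Local Notation Phi1 := (cyclo_pn p n \Po ('X + 1%:P)).

Let p_gt0 : (0 < p)%N := prime_gt0 p_pr.
Let q_gt0 : (0 < q)%N. Proof. by rewrite expn_gt0 p_gt0. Qed.
Let N_gt0 : (0 < N)%N. Proof. by rewrite muln_gt0 q_gt0 subn_gt0 prime_gt1. Qed.

Lemma coef_cyclo_pn j : (j < p)%N -> Phi`_(q * j) = 1.
Proof.
move=> j_lt; rewrite coef_sum (bigD1 (Ordinal j_lt)) //= coefXn eqxx.
rewrite big1 ?addr0 // => i i_neq; rewrite coefXn eqn_pmul2l //.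
suff /negPf -> : j != i by [].
by apply: contraNneq i_neq => j_eq; apply/eqP/val_inj.
Qed.

Lemma size_cyclo_pn : size Phi = N.+1.
Proof.
apply/eqP; rewrite eqn_leq; apply/andP; split.
  apply: leq_trans (size_sum _ _ _) _; apply/bigmax_leqP => i _.
  by rewrite size_polyXn ltnS leq_mul2l; have := ltn_ord i; lia.
rewrite ltnNge; apply/negP => /leq_sizeP/(_ N (leqnn N))/eqP.
by rewrite coef_cyclo_pn ?oner_eq0 // subn1 prednK.
Qed.

Lemma horner_cyclo_pn1 : Phi.[1] = p%:R.
Proof.
rewrite horner_sum; under eq_bigr do rewrite hornerXn expr1n.
by rewrite sumr_const card_ord.
Qed.

Lemma size_cyclo_shift : size Phi1 = N.+1.
Proof. by rewrite size_comp_poly2 ?size_XaddC // size_cyclo_pn. Qed.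

Lemma cyclo_shift_coef0 : Phi1`_0 = p%:R.
Proof. by rewrite -horner_coef0 horner_comp !hornerE horner_cyclo_pn1. Qed.

Lemma cyclo_shift_lead : Phi1`_N = 1.
Proof.
have := @lead_coef_comp _ Phi ('X + 1%:P); rewrite size_XaddC => /(_ isT).
rewrite lead_coefXaddC expr1n mulr1 /lead_coef.
rewrite size_cyclo_shift size_cyclo_pn /=.
by move=> ->; rewrite coef_cyclo_pn // subn1 prednK.
Qed.

(* Mod p, (T + 1)^(q j) = (T^q + 1)^j, and the geometric sum telescopes:
   T^q * Phi(T + 1) = (T^q + 1)^p - 1 = T^(q p). *)
Lemma map_cyclo_shift (F : fieldType) : p \in [pchar F] ->
  map_poly intr Phi1 = 'X^N :> {poly F}.
Proof.
move=> pF; have pFX : p \in [pchar {poly F}] by rewrite pchar_poly.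
rewrite map_comp_poly rmorph_sum /= rmorphD /= map_polyX map_polyC /= rmorph1.
rewrite (raddf_sum (comp_poly ('X + 1%:P))) /=.
under eq_bigr do rewrite map_polyXn comp_Xn_poly exprM.
rewrite exprD_pchar_expn // expr1n.
have Xq_neq0 : ('X^q : {poly F}) != 0 by rewrite monic_neq0 ?monicXn.
apply: (mulfI Xq_neq0); rewrite -exprD -mulnS subn1 prednK //.
have telescope := subrX1 ('X^q + 1 : {poly F}) p.
rewrite addrK -{2}(expn1 p) exprD_pchar_expn // expn1 expr1n addrK in telescope.
by rewrite -telescope exprM.
Qed.

Lemma p_dvd_cyclo_shift_coef j : (0 < j < N)%N -> (p %| absz (Phi1`_j)%R)%N.
Proof.
move=> /andP[j_gt0 j_lt].
have := congr1 (fun r : {poly 'F_p} => r`_j) (map_cyclo_shift (pchar_Fp p_pr)).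
rewrite coef_map coefXn (ltn_eqF j_lt) /= => /eqP.
by rewrite (intr_eq0_pchar _ (pchar_Fp p_pr)).
Qed.

Lemma npa_cyclo_pn0 : npa Phi 0 = 1.
Proof.
by rewrite /npa subn0 /npN size_cyclo_pn coef_cyclo_pn // subn1 prednK.
Qed.

Lemma npa_cyclo_pnN : npa Phi (npN Phi) = 1.
Proof. by rewrite /npa subnn -(muln0 q) coef_cyclo_pn. Qed.

Lemma m_max_cyclo_pn : m_max p Phi = 0%N.
Proof.
apply: m_max_eq0; rewrite ?npa_cyclo_pn0 ?npa_cyclo_pnN ?oner_eq0 // => m _ _.
by rewrite /npv npa_cyclo_pn0 npa_cyclo_pnN vp1 !mulr0 addr0 mulr_ge0 ?ler0n.
Qed.

Lemma s_max_cyclo_pn : s_max p Phi = 0.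
Proof.
rewrite s_max_m_max0 ?m_max_cyclo_pn //.
by rewrite /npv npa_cyclo_pn0 npa_cyclo_pnN vp1 subr0 mul0r.
Qed.

Lemma root_res_poly_cyclo_pn (F : nzRingType) : p \in [pchar F] ->
  root (res_poly p Phi F) 1.
Proof.
move=> pF; rewrite res_poly_flat ?m_max_cyclo_pn ?s_max_cyclo_pn //; last first.
  by rewrite /npv npa_cyclo_pn0 vp1.
by rewrite /root -(rmorph1 intr) horner_map horner_cyclo_pn1 rmorph_nat pcharf0.
Qed.

Lemma npa_cyclo_shift0 : npa Phi1 0 = 1.
Proof. by rewrite /npa subn0 /npN size_cyclo_shift cyclo_shift_lead. Qed.

Lemma npa_cyclo_shiftN : npa Phi1 (npN Phi1) = p%:R.
Proof. by rewrite /npa subnn cyclo_shift_coef0. Qed.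

Lemma npN_cyclo_shift : npN Phi1 = N.
Proof. by rewrite /npN size_cyclo_shift. Qed.

Lemma npv_cyclo_shift0 : npv p Phi1 0 = 0.
Proof. by rewrite /npv npa_cyclo_shift0 vp1. Qed.

Lemma npv_cyclo_shiftN : npv p Phi1 (npN Phi1) = 1.
Proof. by rewrite /npv npa_cyclo_shiftN natz vp_prime. Qed.

Lemma m_max_cyclo_shift : m_max p Phi1 = 0%N.
Proof.
have p_neq0 : p%:R != 0 :> int by rewrite pnatr_eq0 -lt0n.
apply: m_max_eq0; rewrite ?npa_cyclo_shift0 ?npa_cyclo_shiftN ?oner_eq0 //.
move=> m; rewrite npv_cyclo_shift0 npv_cyclo_shiftN mulr0 add0r mulr1.
rewrite npN_cyclo_shift => /andP[m_gt0 m_lt] am_neq0.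
have v_ge1 : 1 <= npv p Phi1 m.
  apply: vp_ge1 => //; rewrite /npa npN_cyclo_shift p_dvd_cyclo_shift_coef //.
  by rewrite subn_gt0 m_lt ltn_subrL m_gt0 N_gt0.
apply: (@le_trans _ _ N%:R); first by rewrite ler_nat ltnW.
by rewrite ler_peMr ?ler0n.
Qed.

Lemma s_max_cyclo_shift : s_max p Phi1 = 1 / N%:R.
Proof.
rewrite s_max_m_max0 ?m_max_cyclo_shift //.
by rewrite npv_cyclo_shift0 npv_cyclo_shiftN subr0 npN_cyclo_shift.
Qed.

(* The exponent attached to coefficient k of the residue polynomial is
   (N - k)/N: an integer only at the two ends of the segment. *)
Lemma res_poly_cyclo_shift_Xn (F : nzRingType) : p \in [pchar F] ->
  res_poly p Phi1 F = 'X^N + 1.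
Proof.
move=> pF; rewrite res_poly_m_max0 ?m_max_cyclo_shift //.
rewrite s_max_cyclo_shift npv_cyclo_shift0 npN_cyclo_shift.
have N_neq0 : N%:R != 0 :> rat by rewrite pnatr_eq0 -lt0n.
apply/polyP => k; rewrite coef_poly coefD coefXn coefC add0r.
case: ltnP => k_le; last first.
  have k_gt0 : (0 < k)%N := leq_ltn_trans (leq0n N) k_le.
  by rewrite eq_sym (ltn_eqF k_le) (negPf (lt0n_neq0 k_gt0)) addr0.
have [->|k_gt0] := posnP k.
  rewrite subn0 div1r mulVf // cyclo_shift_coef0 natz coefC1_p ?prime_gt1 //.
  by rewrite eq_sym (negPf (lt0n_neq0 N_gt0)) add0r.
have [->|k_neq] := eqVneq k N.
  by rewrite subnn mulr0 coefC0 // cyclo_shift_lead addr0.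
have k_lt : (k < N)%N by rewrite ltn_neqAle k_neq -ltnS.
rewrite coefC_frac ?(negPf k_neq) ?gtn_eqF ?addr0 //.
rewrite div1r mulrC ltr_pdivrMr ?ltr0n // mul1r ltr_nat ltn_subrL k_gt0 N_gt0.
by rewrite andbT mulr_gt0 ?invr_gt0 ?ltr0n // subn_gt0.
Qed.

Lemma res_poly_cyclo_shift (F : comNzRingType) : p \in [pchar F] ->
  res_poly p Phi1 F = ('X^(p - 1) + 1) ^+ q.
Proof.
move=> pF; rewrite res_poly_cyclo_shift_Xn // exprD_pchar_expn ?pchar_poly //.
by rewrite expr1n -exprM mulnC.
Qed.

End CyclotomicPrimePower.

Theorem proposition3p1 (p n : nat) (F : closedFieldType) (zeta : F) :
  prime p -> (3 <= p)%N -> (2 <= n)%N -> p \in [pchar F] ->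
  (2 * (p - 1)).-primitive_root zeta ->
  let Phi := cyclo_pn p n in
  (* step 0: zeta^(-1) = 0, Phi^(0,n)(T) = Phi(T + 0) *)
  let Phi0 := Phi \Po ('X + 0%:P) in
  (* step 1 with z_0 = 1, s_0 = 0: zeta^(0) = 0 + [1] p^0 = 1 *)
  let Phi1 := Phi \Po ('X + 1%:P) in
  [/\ s_max p Phi0 = 0,
      root (res_poly p Phi0 F) 1,
      s_max p Phi1 = 1 / (p ^ n.-1 * (p - 1))%:R,
      root (res_poly p Phi1 F) ((-1) ^+ n * zeta)
    & mup ((-1) ^+ n * zeta) (res_poly p Phi1 F) = (p ^ n.-1)%N].
Proof.
move=> p_pr p_ge3 _ pF zeta_prim Phi Phi0 Phi1.
have -> : Phi0 = Phi by rewrite /Phi0 addr0 comp_polyXr.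
have pm1_gt0 : (0 < p - 1)%N by rewrite subn_gt0 prime_gt1.
have pm1_even : ~~ odd (p - 1).
  by rewrite oddB ?prime_gt0 //; case: (even_prime p_pr) p_ge3 => [->|->].
have y_root : ((-1) ^+ n * zeta) ^+ (p - 1) = -1.
  by rewrite expr_sign_mul_even // prim_expr_half.
have pm1_neq0 : (p - 1)%:R != 0 :> F.
  by rewrite natrB ?prime_gt0 // (pcharf0 pF) sub0r oppr_eq0 oner_eq0.
have mup_y : mup ((-1) ^+ n * zeta) (res_poly p Phi1 F) = (p ^ n.-1)%N.
  by rewrite res_poly_cyclo_shift // mupX ?Xn_add1_neq0 // mup_Xn_add1 // muln1.
split; [exact: s_max_cyclo_pn | exact: root_res_poly_cyclo_pn
       | exact: s_max_cyclo_shift | | exact: mup_y].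
rewrite -dvdp_XsubCl XsubC_dvd ?mup_y ?expn_gt0 ?prime_gt0 //.
by rewrite res_poly_cyclo_shift // expf_neq0 ?Xn_add1_neq0.
Qed.
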